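(* Let $w>0$ be a smooth $1$-periodic function with $\int_0^1 w(x)\,dx=1$, and let $Q(y)=y\ln y-y+1$. Then $$\int_0^1 Q(w)\,dx\le \Bigl(\int_0^1 \frac{w_x^2}{w}\,dx\Bigr)^{1/2}.$$ *)

From Stdlib Require Import Reals.
From Coquelicot Require Import Coquelicot.
Open Scope R_scope.

(* f is smooth (C^infinity) on R: every iterated derivative exists everywhere
   (hence every derivative is also continuous). *)
Definition smooth (f : R -> R) : Prop :=
  forall (n : nat) (x : R), ex_derive (Derive_n f n) x.

Definition periodic1 (f : R -> R) : Prop := forall x : R, f (x + 1) = f x.

Definition Qf (y : R) : R := y * ln y - y + 1.

From Stdlib Require Import Reals Lra.
From Coquelicot Require Import Coquelicot.
Open Scope R_scope.

(* Let W and m be the maximum and the minimum of w on [0,1]; the mass condition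
   forces m <= 1.  Since Q(y) <= y ln W - y + 1 for 0 < y <= W, integrating gives
   int Q(w) <= ln W.  By the fundamental theorem of calculus and Cauchy-Schwarz on
   a subinterval of [0,1], (sqrt W - sqrt m)^2 <= int ((sqrt w)')^2 = I/4, where I
   is the Fisher information int w_x^2/w.  Hence sqrt W <= 1 + sqrt I / 2 and
   ln W = 2 ln (sqrt W) <= 2 ln (1 + sqrt I / 2) <= sqrt I. *)

Lemma sqr_le_RInt_sqr (g : R -> R) (a b c : R) :
  a <= b -> b - a <= 1 -> is_RInt g a b c ->
  ex_RInt (fun x => g x ^ 2) a b -> c ^ 2 <= RInt (fun x => g x ^ 2) a b.
Proof.
  intros hab hlen hg hg2.
  set (I2 := RInt (fun x => g x ^ 2) a b).
  (* expand 0 <= int (g - c)^2 = I2 - 2 c^2 + (b - a) c^2 *)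
  assert (hsq : is_RInt (fun x => (g x - c) ^ 2) a b (I2 - 2 * c * c + (b - a) * c ^ 2)).
  { eapply is_RInt_ext; [| exact (is_RInt_plus _ _ a b _ _
      (is_RInt_minus _ _ a b _ _ (RInt_correct _ _ _ hg2) (is_RInt_scal _ a b (2 * c) _ hg))
      (is_RInt_const a b (c ^ 2)))].
    intros x _. unfold plus, minus, scal, opp; simpl. unfold plus, opp, mult; simpl. ring. }
  assert (hnonneg : 0 <= I2 - 2 * c * c + (b - a) * c ^ 2).
  { rewrite <- (is_RInt_unique _ _ _ _ hsq).
    apply RInt_ge_0; [lra | eexists; exact hsq | intros; apply pow2_ge_0]. }
  assert (0 <= (1 - (b - a)) * c ^ 2) by (apply Rmult_le_pos; [lra | apply pow2_ge_0]).
  nra.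
Qed.

Lemma RInt_subinterval_le (f : R -> R) (a b c d : R) :
  (forall x, continuous f x) -> (forall x, 0 <= f x) ->
  a <= c -> c <= d -> d <= b -> RInt f c d <= RInt f a b.
Proof.
  intros hcont hpos hac hcd hdb.
  assert (hint : forall u v, ex_RInt f u v)
    by (intros; apply (@ex_RInt_continuous R_CompleteNormedModule); auto).
  rewrite <- (RInt_Chasles f a c b), <- (RInt_Chasles f c d b) by auto.
  assert (0 <= RInt f a c) by (apply RInt_ge_0; auto).
  assert (0 <= RInt f d b) by (apply RInt_ge_0; auto).
  unfold plus; simpl. lra.
Qed.

Lemma sqr_sub_le_RInt_sqr_derive (f f' : R -> R) (x y : R) :
  (forall t, is_derive f t (f' t)) -> (forall t, continuous f' t) ->
  0 <= x <= 1 -> 0 <= y <= 1 ->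
  (f y - f x) ^ 2 <= RInt (fun t => f' t ^ 2) 0 1.
Proof.
  intros hder hcont.
  assert (hcont2 : forall t, continuous (fun t => f' t ^ 2) t).
  { intro t. apply (continuous_comp f' (fun u => u ^ 2)); [auto |].
    apply (@ex_derive_continuous R_AbsRing R_NormedModule). auto_derive. easy. }
  assert (ordered : forall u v, 0 <= u -> u <= v -> v <= 1 ->
            (f v - f u) ^ 2 <= RInt (fun t => f' t ^ 2) 0 1).
  { intros u v hu huv hv.
    apply Rle_trans with (RInt (fun t => f' t ^ 2) u v).
    - apply sqr_le_RInt_sqr; [lra | lra | |].
      + exact (is_RInt_derive f f' u v (fun t _ => hder t) (fun t _ => hcont t)).
      + apply (@ex_RInt_continuous R_CompleteNormedModule). auto.
    - apply RInt_subinterval_le; auto; intros; apply pow2_ge_0. }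
  intros hx hy. destruct (Rle_dec x y).
  - apply ordered; lra.
  - replace ((f y - f x) ^ 2) with ((f x - f y) ^ 2) by ring. apply ordered; lra.
Qed.

Lemma sqrt_sub_le_half_sqrt_fisher (w : R -> R) (x y : R) :
  (forall t, 0 < w t) -> (forall t, ex_derive w t) -> (forall t, continuous (Derive w) t) ->
  0 <= x <= 1 -> 0 <= y <= 1 ->
  sqrt (w y) - sqrt (w x) <= sqrt (RInt (fun t => Derive w t ^ 2 / w t) 0 1) / 2.
Proof.
  intros hpos hw hdw hx hy.
  set (g := fun t => Derive w t * / (2 * sqrt (w t))).
  assert (hder : forall t, is_derive (fun t => sqrt (w t)) t (g t)).
  { intro t. unfold g. auto_derive; [split; auto | now rewrite Rmult_1_l]. }
  assert (hcont : forall t, continuous g t).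
  { intro t. apply (continuous_mult (Derive w) (fun t => / (2 * sqrt (w t)))); [auto |].
    apply (continuous_comp w (fun u => / (2 * sqrt u))).
    - apply (@ex_derive_continuous R_AbsRing R_NormedModule), hw.
    - assert (0 < sqrt (w t)) by (apply sqrt_lt_R0, hpos).
      apply (@ex_derive_continuous R_AbsRing R_NormedModule). auto_derive.
      repeat split; [apply hpos | lra]. }
  assert (hg2 : forall t, g t ^ 2 = / 4 * (Derive w t ^ 2 / w t)).
  { intro t. unfold g. rewrite <- (sqrt_sqrt (w t)) at 2 by (apply Rlt_le, hpos).
    field. apply Rgt_not_eq, sqrt_lt_R0, hpos. }
  assert (hfisher : RInt (fun t => g t ^ 2) 0 1 = / 4 * RInt (fun t => Derive w t ^ 2 / w t) 0 1).
  { rewrite (RInt_ext _ _ _ _ (fun t _ => hg2 t)).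
    apply (RInt_scal (fun t => Derive w t ^ 2 / w t)).
    apply (ex_RInt_ext (fun t => 4 * g t ^ 2)).
    - intros t _. rewrite hg2. lra.
    - apply (@ex_RInt_continuous R_CompleteNormedModule). intros t _.
      apply (continuous_comp g (fun u => 4 * u ^ 2)); [auto |].
      apply (@ex_derive_continuous R_AbsRing R_NormedModule). auto_derive. easy. }
  assert (hsq := sqr_sub_le_RInt_sqr_derive _ _ x y hder hcont hx hy).
  rewrite hfisher in hsq.
  set (I := RInt (fun t => Derive w t ^ 2 / w t) 0 1) in *.
  assert (hI : 0 <= I) by (specialize (pow2_ge_0 (sqrt (w y) - sqrt (w x))); lra).
  assert (sqrt I * sqrt I = I) by (apply sqrt_sqrt; exact hI).
  assert (0 <= sqrt I) by apply sqrt_pos.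
  nra.
Qed.

Lemma ln_le_of_sqrt_le (W s : R) : 0 < W -> sqrt W <= 1 + s / 2 -> ln W <= s.
Proof.
  intros hW hsqrt.
  assert (hsW : 0 < sqrt W) by (apply sqrt_lt_R0; exact hW).
  assert (hdouble : ln W = 2 * ln (sqrt W)).
  { rewrite <- (sqrt_sqrt W) at 1 by lra. rewrite ln_mult by auto. ring. }
  assert (ln (sqrt W) <= ln (1 + s / 2)) by (apply ln_le; auto).
  assert (ln (1 + s / 2) <= s / 2).
  { rewrite <- (ln_exp (s / 2)) at 2. apply ln_le; [lra | apply exp_ineq1_le]. }
  lra.
Qed.

Lemma RInt_Qf_le_ln (w : R -> R) (M : R) :
  (forall x, continuous w x) -> (forall x, 0 < w x) -> RInt w 0 1 = 1 ->
  (forall x, 0 <= x <= 1 -> w x <= M) ->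
  RInt (fun x => Qf (w x)) 0 1 <= ln M.
Proof.
  intros hcont hpos hmass hM.
  assert (hint : ex_RInt w 0 1)
    by (apply (@ex_RInt_continuous R_CompleteNormedModule); auto).
  assert (htangent : is_RInt (fun x => w x * ln M - w x + 1) 0 1
                       (ln M * RInt w 0 1 - RInt w 0 1 + (1 - 0) * 1)).
  { eapply is_RInt_ext; [| exact (is_RInt_plus _ _ 0 1 _ _
      (is_RInt_minus _ _ 0 1 _ _ (is_RInt_scal _ 0 1 (ln M) _ (RInt_correct _ _ _ hint))
         (RInt_correct _ _ _ hint)) (is_RInt_const 0 1 1))].
    intros x _. unfold plus, minus, scal, opp; simpl. unfold plus, opp, mult; simpl. ring. }
  replace (ln M) with (ln M * RInt w 0 1 - RInt w 0 1 + (1 - 0) * 1) by (rewrite hmass; ring).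
  rewrite <- (is_RInt_unique _ _ _ _ htangent).
  apply RInt_le; [lra | | eexists; exact htangent |].
  - apply (@ex_RInt_continuous R_CompleteNormedModule). intros x _.
    apply (continuous_comp w Qf); [auto |].
    apply (@ex_derive_continuous R_AbsRing R_NormedModule). unfold Qf. auto_derive. apply hpos.
  - intros x hx. unfold Qf.
    assert (ln (w x) <= ln M) by (apply ln_le; [apply hpos | apply hM; lra]).
    specialize (hpos x). nra.
Qed.

Theorem lemma3p2 (w : R -> R)
  (hsmooth : smooth w) (hper : periodic1 w) (hpos : forall x, 0 < w x)
  (hmass : RInt w 0 1 = 1) :
  RInt (fun x => Qf (w x)) 0 1
    <= sqrt (RInt (fun x => (Derive w x) ^ 2 / w x) 0 1).
Proof.
  assert (hw : forall x, ex_derive w x) by exact (hsmooth 0%nat).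
  assert (hcont : forall x, continuous w x)
    by (intro x; apply (@ex_derive_continuous R_AbsRing R_NormedModule), hw).
  assert (hdcont : forall x, continuous (Derive w) x)
    by (intro x; apply (@ex_derive_continuous R_AbsRing R_NormedModule), (hsmooth 1%nat)).
  assert (hcont_pt : forall x, 0 <= x <= 1 -> continuity_pt w x)
    by (intros; apply continuity_pt_filterlim, hcont).
  destruct (continuity_ab_maj w 0 1 ltac:(lra) hcont_pt) as [xmax [hmax hxmax]].
  destruct (continuity_ab_min w 0 1 ltac:(lra) hcont_pt) as [xmin [hmin hxmin]].
  assert (hmin1 : w xmin <= 1).
  { assert (hconst : RInt (fun _ => w xmin) 0 1 = w xmin)
      by (rewrite RInt_const; unfold scal; simpl; unfold mult; simpl; ring).
    rewrite <- hmass, <- hconst.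
    apply RInt_le; [lra | apply ex_RInt_const | |].
    - apply (@ex_RInt_continuous R_CompleteNormedModule). auto.
    - intros; apply hmin; lra. }
  assert (sqrt (w xmin) <= 1) by (rewrite <- sqrt_1; apply sqrt_le_1_alt; exact hmin1).
  assert (hosc := sqrt_sub_le_half_sqrt_fisher w xmin xmax hpos hw hdcont hxmin hxmax).
  apply Rle_trans with (ln (w xmax)).
  - exact (RInt_Qf_le_ln w (w xmax) hcont hpos hmass hmax).
  - apply ln_le_of_sqrt_le; [apply hpos | lra].
Qed.
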